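(* Suppose $\gamma\ge\sqrt{8M}$ and $U:\mathbb R^d\to\mathbb R$ is twice continuously differentiable with $M$-Lipschitz gradient and $m$-strongly convex, with minimizer $x^*$; let $z^*=(x^*,0_d)$, $\lambda=\min(\frac14,\frac m{\gamma^2})$ and \[\mathcal V(x,v)=U(x)-U(x^* )+\frac14\gamma^2\big(\|x-x^*+\gamma^{-1}v\|^2+\|\gamma^{-1}v\|^2-\lambda\|x-x^*\|^2\big).\] Then for every $z=(x,v)\in\mathbb R^{2d}$, $\mathcal V(x,v)\ge0$ and \[\mathcal V^{1/2}(x,v)\ge\frac18(\gamma\|x-x^*\|+\|v\|)\ge\frac{\sqrt M}8\|z-z^*\|_{a,b}.\] Moreover, $\mathcal V^{1/2}$ is $8\gamma$-Lipschitz with respect to $\|\cdot\|_{a,b}$.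
   Context: $a=1/M$, $b=1/\gamma$, and $\|z\|_{a,b}^2=\|x\|^2+2b\langle x,v\rangle+a\|v\|^2$ for $z=(x,v)\in\mathbb R^{2d}$. *)

From HB Require Import structures.
From mathcomp Require Import all_boot all_order all_algebra.
From mathcomp Require Import all_classical all_reals all_analysis.
Set Implicit Arguments. Unset Strict Implicit. Unset Printing Implicit Defensive.
Import Order.TTheory GRing.Theory Num.Theory.
Import numFieldNormedType.Exports.
Local Open Scope ring_scope.

Section Defs.
Variables (R : realType) (d : nat).

Definition dotp (x y : 'rV[R]_d) : R := \sum_(i < d) x 0 i * y 0 i.
Definition enorm (x : 'rV[R]_d) : R := Num.sqrt (dotp x x).

Definition grad (U : 'rV[R]_d -> R) (x : 'rV[R]_d) : 'rV[R]_d :=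
  \row_i ('d U x (delta_mx 0 i : 'rV[R]_d)).

Definition C2 (U : 'rV[R]_d -> R) : Prop :=
  (forall x, differentiable U x) /\
  (forall x, differentiable (grad U) x) /\
  (forall h : 'rV[R]_d, continuous (fun x => 'd (grad U) x h)).

Definition grad_lipschitz (M : R) (U : 'rV[R]_d -> R) : Prop :=
  forall x y, enorm (grad U x - grad U y) <= M * enorm (x - y).

Definition strongly_convex (m : R) (U : 'rV[R]_d -> R) : Prop :=
  forall x y (t : R), 0 <= t <= 1 ->
    U (t *: x + (1 - t) *: y) <=
      t * U x + (1 - t) * U y - m / 2 * t * (1 - t) * enorm (x - y) ^+ 2.

Definition is_minimizer (U : 'rV[R]_d -> R) (xs : 'rV[R]_d) : Prop :=
  forall x, U xs <= U x.

(* ||(x,v)||_{a,b} with a = 1/M, b = 1/gamma *)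
Definition norm_ab (M gamma : R) (x v : 'rV[R]_d) : R :=
  Num.sqrt (enorm x ^+ 2 + 2 * gamma^-1 * dotp x v + M^-1 * enorm v ^+ 2).

Definition lam (m gamma : R) : R := Num.min (1/4) (m / gamma ^+ 2).

Definition Vfun (U : 'rV[R]_d -> R) (m gamma : R) (xs : 'rV[R]_d)
    (x v : 'rV[R]_d) : R :=
  U x - U xs + 1/4 * gamma ^+ 2 *
    (enorm (x - xs + gamma^-1 *: v) ^+ 2 + enorm (gamma^-1 *: v) ^+ 2
     - lam m gamma * enorm (x - xs) ^+ 2).

End Defs.

From HB Require Import structures.
From mathcomp Require Import all_boot all_order all_algebra.
From mathcomp Require Import all_classical all_reals all_analysis.
From mathcomp Require Import ring lra.
Import Order.TTheory GRing.Theory Num.Theory.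
Import numFieldNormedType.Exports.
Local Open Scope ring_scope.
Set Implicit Arguments. Unset Strict Implicit. Unset Printing Implicit Defensive.

(* Write y = x - x*, w = v / gamma and F = U x - U x*, so that
   V = F + (gamma/2)^2 Q(y, w) with Q(y, w) = |y + w|^2 + |w|^2 - lambda |y|^2.
   Since lambda <= 1/4, Q(y, w) >= (|y + w|^2 + |w|^2) / 2; this gives the lower
   bounds, and makes Q a positive semidefinite quadratic form in (y, w), so that
   sqrt Q satisfies the triangle inequality.  The descent lemma and
   |grad U|^2 <= 4 M F show that sqrt F is sqrt M-Lipschitz.  Hence sqrt V, the
   Euclidean length of the plane vector (sqrt F, gamma sqrt Q / 2), increases
   along an increment (h, dv) by at most sqrt (M |h|^2 + gamma^2 Q(h, dv/gamma) / 4),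
   which gamma^2 >= 8 M bounds by gamma ||(h, dv)||_{a,b} / sqrt 2. *)

Section SqrtBounds.
Variable R : rcfType.
Implicit Types a b c e x y : R.

Lemma sqrtr_le_of_le_sqr x y : 0 <= y -> x <= y ^+ 2 -> Num.sqrt x <= y.
Proof.
by move=> y0 xy; rewrite -(ger0_norm y0) -sqrtr_sqr ler_wsqrtr.
Qed.

Lemma ler_sqrtr_of_sqr_le x y : 0 <= x -> x ^+ 2 <= y -> x <= Num.sqrt y.
Proof.
by move=> x0 xy; rewrite -(ger0_norm x0) -sqrtr_sqr ler_wsqrtr.
Qed.

Lemma sqrt_sqrD_le a b c e :
  Num.sqrt ((a + b) ^+ 2 + (c + e) ^+ 2)
    <= Num.sqrt (a ^+ 2 + c ^+ 2) + Num.sqrt (b ^+ 2 + e ^+ 2).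
Proof.
have ac0 : 0 <= a ^+ 2 + c ^+ 2 by rewrite addr_ge0 ?sqr_ge0.
have be0 : 0 <= b ^+ 2 + e ^+ 2 by rewrite addr_ge0 ?sqr_ge0.
have cs : a * b + c * e <= Num.sqrt (a ^+ 2 + c ^+ 2) * Num.sqrt (b ^+ 2 + e ^+ 2).
  rewrite -sqrtrM //; apply: le_trans (ler_norm _) _.
  rewrite -sqrtr_sqr ler_wsqrtr //.
  (* Lagrange's identity *)
  have -> : (a ^+ 2 + c ^+ 2) * (b ^+ 2 + e ^+ 2)
            = (a * b + c * e) ^+ 2 + (a * e - c * b) ^+ 2 by ring.
  by rewrite lerDl sqr_ge0.
apply: sqrtr_le_of_le_sqr; first by rewrite addr_ge0 ?sqrtr_ge0.
rewrite [X in _ <= X]sqrrD mulr2n !sqr_sqrtr //; lra.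
Qed.

End SqrtBounds.

Section Discriminant.
Variable R : realFieldType.

Lemma sqr_le_of_quadratic_ge0 (a b c : R) : 0 <= c ->
  (forall t, 0 <= a - 2 * t * b + t ^+ 2 * c) -> b ^+ 2 <= a * c.
Proof.
move=> c0 q_ge0; have [c_gt0 | c_le0] := ltP 0 c.
  have := q_ge0 (b / c).
  have -> : a - 2 * (b / c) * b + (b / c) ^+ 2 * c = (a * c - b ^+ 2) / c.
    by field; rewrite gt_eqF.
  by rewrite ler_pdivlMr // mul0r subr_ge0.
have c_eq0 : c = 0 by apply/eqP; rewrite eq_le c_le0 c0.
rewrite {}c_eq0 in q_ge0 *.
have [-> | b_neq0] := eqVneq b 0; first by rewrite expr0n mulr0.
have := q_ge0 ((a + 1) / (2 * b)).
have -> : a - 2 * ((a + 1) / (2 * b)) * b + ((a + 1) / (2 * b)) ^+ 2 * 0 = -1.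
  by field.
by rewrite ler0N1.
Qed.

End Discriminant.

Section PositiveSemidefiniteForm.
Variables (R : rcfType) (V : lmodType R) (b : V -> V -> R).
Hypotheses (bDl : forall u u' w, b (u + u') w = b u w + b u' w)
  (bZl : forall a u w, b (a *: u) w = a * b u w)
  (bC : forall u w, b u w = b w u)
  (b_ge0 : forall u, 0 <= b u u).

Lemma form_expand u w a :
  b (u + a *: w) (u + a *: w) = b u u + 2 * a * b u w + a ^+ 2 * b w w.
Proof.
have bDr u1 w1 w2 : b u1 (w1 + w2) = b u1 w1 + b u1 w2.
  by rewrite bC bDl !(bC _ u1).
have bZr a1 u1 w1 : b u1 (a1 *: w1) = a1 * b u1 w1.
  by rewrite bC bZl bC.
by rewrite !bDl !bDr !bZl !bZr (bC w u); ring.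
Qed.

Lemma form_cauchy_schwarz u w : b u w ^+ 2 <= b u u * b w w.
Proof.
apply: sqr_le_of_quadratic_ge0 => // t.
by have := b_ge0 (u + (- t) *: w); rewrite form_expand sqrrN mulrN mulNr.
Qed.

Lemma form_le_sqrt u w : b u w <= Num.sqrt (b u u) * Num.sqrt (b w w).
Proof.
rewrite -sqrtrM //; apply: le_trans (ler_norm _) _.
by rewrite -sqrtr_sqr ler_wsqrtr // form_cauchy_schwarz.
Qed.

Lemma sqrt_formD_le u w :
  Num.sqrt (b (u + w) (u + w)) <= Num.sqrt (b u u) + Num.sqrt (b w w).
Proof.
apply: sqrtr_le_of_le_sqr; first by rewrite addr_ge0 ?sqrtr_ge0.
have := form_expand u w 1; rewrite scale1r => ->.
rewrite sqrrD mulr2n !sqr_sqrtr // expr1n mul1r mulr1.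
have := form_le_sqrt u w; lra.
Qed.

End PositiveSemidefiniteForm.

Section EuclideanNorm.
Variables (R : realType) (d : nat).
Implicit Types x y z : 'rV[R]_d.

Lemma dotpC x y : dotp x y = dotp y x.
Proof. by apply: eq_bigr => i _; rewrite mulrC. Qed.

Lemma dotpDl x y z : dotp (x + y) z = dotp x z + dotp y z.
Proof. by rewrite /dotp -big_split; apply: eq_bigr => i _; rewrite !mxE mulrDl. Qed.

Lemma dotpZl (c : R) x y : dotp (c *: x) y = c * dotp x y.
Proof. by rewrite /dotp mulr_sumr; apply: eq_bigr => i _; rewrite !mxE mulrA. Qed.

Lemma dotpNl x y : dotp (- x) y = - dotp x y.
Proof. by rewrite -scaleN1r dotpZl mulN1r. Qed.

Lemma dotpDr x y z : dotp x (y + z) = dotp x y + dotp x z.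
Proof. by rewrite dotpC dotpDl !(dotpC x). Qed.

Lemma dotpZr (c : R) x y : dotp x (c *: y) = c * dotp x y.
Proof. by rewrite dotpC dotpZl dotpC. Qed.

Lemma dotp_ge0 x : 0 <= dotp x x.
Proof. by apply: sumr_ge0 => i _; rewrite -expr2 sqr_ge0. Qed.

Lemma enorm_ge0 x : 0 <= enorm x.
Proof. exact: sqrtr_ge0. Qed.

Lemma enorm_sqr x : enorm x ^+ 2 = dotp x x.
Proof. by rewrite sqr_sqrtr // dotp_ge0. Qed.

Lemma enormZ (c : R) x : enorm (c *: x) = `|c| * enorm x.
Proof.
by rewrite /enorm dotpZl dotpZr mulrA -expr2 sqrtrM ?sqr_ge0 // sqrtr_sqr.
Qed.

Lemma enormN x : enorm (- x) = enorm x.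
Proof. by rewrite -scaleN1r enormZ normrN normr1 mul1r. Qed.

Lemma dotp_le_enorm x y : dotp x y <= enorm x * enorm y.
Proof. exact: form_le_sqrt dotpDl dotpZl dotpC dotp_ge0 x y. Qed.

Lemma enorm_sqrD x y :
  enorm (x + y) ^+ 2 = enorm x ^+ 2 + 2 * dotp x y + enorm y ^+ 2.
Proof. by rewrite !enorm_sqr dotpDl !dotpDr (dotpC y x); ring. Qed.

Lemma enorm_sqrD_le x y :
  enorm (x + y) ^+ 2 <= 2 * enorm x ^+ 2 + 2 * enorm y ^+ 2.
Proof.
rewrite enorm_sqrD; have := dotp_le_enorm x y.
have := sqr_ge0 (enorm x - enorm y); rewrite sqrrB; lra.
Qed.

End EuclideanNorm.

Section Descent.
Variables (R : realType) (d : nat) (U : 'rV[R]_d -> R).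

Lemma diff_grad x h : 'd U x h = dotp (grad U x) h.
Proof.
rewrite {1}(row_sum_delta h) linear_sum; apply: eq_bigr => i _.
by rewrite linearZ /= mxE mulrC.
Qed.

Lemma is_derive_line x h (t : R) : differentiable U (t *: h + x) ->
  is_derive t 1 (fun s : R => U (s *: h + x)) ('d U (t *: h + x) h).
Proof.
move=> dU.
have shiftE : (fun s : R => s^-1 *: (((fun s => U (s *: h + x)) \o shift t) (s *: 1)
                                      - U (t *: h + x)))
            = (fun s : R => s^-1 *: ((U \o shift (t *: h + x)) (s *: h)
                                      - U (t *: h + x))).
  by apply/funext => s /=; rewrite [s *: 1]mulr1 scalerDl addrA.
have dUh : derivable U (t *: h + x) h by exact: diff_derivable.
by split; rewrite ?/derivable ?/derive shiftE // -deriveE.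
Qed.

Lemma descent_lemma (M : R) x h : 0 <= M ->
  (forall x, differentiable U x) -> grad_lipschitz M U ->
  U (h + x) <= U x + dotp (grad U x) h + M * enorm h ^+ 2.
Proof.
move=> M0 dU gL.
case: (@MVT R (fun s => U (s *: h + x)) (fun s => 'd U (s *: h + x) h) 0 1 ltr01).
- by move=> s _; apply: is_derive_line.
- apply: derivable_within_continuous => s _.
  by have [] := is_derive_line (dU (s *: h + x)).
move=> c; rewrite in_itv /= => /andP[c0 c1].
rewrite scale1r scale0r add0r subr0 mulr1 diff_grad => /(canRL (subrK _)) ->.
rewrite addrC -addrA lerD2l.
have gc : enorm (grad U (c *: h + x) - grad U x) <= M * (c * enorm h).
  by have := gL (c *: h + x) x; rewrite addrK enormZ ger0_norm // ltW.
have := le_trans (dotp_le_enorm _ h) (ler_wpM2r (enorm_ge0 h) gc).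
rewrite dotpDl dotpNl -lerBlDl => /le_trans; apply.
by rewrite -2!mulrA -expr2 ler_wpM2l // ler_piMl ?sqr_ge0 // ltW.
Qed.

End Descent.

Section SuboptimalityGap.
Variables (R : realType) (d : nat) (M : R) (U : 'rV[R]_d -> R) (xs : 'rV[R]_d).
Hypotheses (M_gt0 : 0 < M) (dU : forall x, differentiable U x)
  (gL : grad_lipschitz M U) (xs_min : is_minimizer U xs).

Lemma enorm_grad_sqr_le x : enorm (grad U x) ^+ 2 <= 4 * M * (U x - U xs).
Proof.
set G := enorm (grad U x) ^+ 2.
have := le_trans (xs_min _)
  (descent_lemma x (- (2 * M)^-1 *: grad U x) (ltW M_gt0) dU gL).
rewrite dotpZr enormZ normrN -enorm_sqr -/G ger0_norm; last first.
  by rewrite invr_ge0 mulr_ge0 // ltW.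
have -> : U x + - (2 * M)^-1 * G + M * ((2 * M)^-1 * enorm (grad U x)) ^+ 2
          = U x - (4 * M)^-1 * G.
  by rewrite exprMn -/G; field; rewrite gt_eqF.
by rewrite -ler_pdivrMl ?mulr_gt0 // lerBrDr -lerBrDl.
Qed.

Lemma gap_le_sqr x h :
  U (h + x) - U xs <= (Num.sqrt (U x - U xs) + Num.sqrt M * enorm h) ^+ 2.
Proof.
set F := U x - U xs; have F_ge0 : 0 <= F by rewrite subr_ge0.
have grad_le : enorm (grad U x) <= 2 * Num.sqrt M * Num.sqrt F.
  rewrite -ler_sqr ?nnegrE ?enorm_ge0 ?mulr_ge0 ?sqrtr_ge0 //.
  rewrite 2![in X in _ <= X]exprMn (sqr_sqrtr (ltW M_gt0)) (sqr_sqrtr F_ge0).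
  have -> : (2 : R) ^+ 2 = 4 by ring.
  exact: enorm_grad_sqr_le.
have dot_le := ler_wpM2r (enorm_ge0 h) grad_le.
have := le_trans (dotp_le_enorm (grad U x) h) dot_le.
have := descent_lemma x h (ltW M_gt0) dU gL.
have sF : Num.sqrt F ^+ 2 = F := sqr_sqrtr F_ge0.
have tM : Num.sqrt M ^+ 2 = M := sqr_sqrtr (ltW M_gt0).
set s := Num.sqrt F; set t := Num.sqrt M; set e := enorm h.
have -> : (s + t * e) ^+ 2 = s ^+ 2 + 2 * t * s * e + t ^+ 2 * e ^+ 2 by ring.
rewrite sF tM /F.
set a := U (h + x); set b := dotp _ _; set u := U x; set u' := U xs.
lra.
Qed.

End SuboptimalityGap.

Section LyapunovForm.
Variables (R : realType) (d : nat).
Implicit Types (l : R) (y w h k : 'rV[R]_d) (p q : 'rV[R]_d * 'rV[R]_d).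

Definition lyap_form l y w : R :=
  enorm (y + w) ^+ 2 + enorm w ^+ 2 - l * enorm y ^+ 2.

Definition lyap_dot l p q : R :=
  dotp (p.1 + p.2) (q.1 + q.2) + dotp p.2 q.2 - l * dotp p.1 q.1.

Lemma lyap_dotDl l p p' q :
  lyap_dot l (p + p') q = lyap_dot l p q + lyap_dot l p' q.
Proof. by rewrite /lyap_dot /= addrACA !dotpDl; ring. Qed.

Lemma lyap_dotZl l a p q : lyap_dot l (a *: p) q = a * lyap_dot l p q.
Proof. by rewrite /lyap_dot /= -scalerDr !dotpZl; ring. Qed.

Lemma lyap_dotC l p q : lyap_dot l p q = lyap_dot l q p.
Proof. by rewrite /lyap_dot dotpC (dotpC p.2) (dotpC p.1). Qed.

Lemma lyap_dot_diag l p : lyap_dot l p p = lyap_form l p.1 p.2.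
Proof. by rewrite /lyap_form !enorm_sqr. Qed.

Lemma lyap_form_ge l y w : l <= 1/4 ->
  (enorm (y + w) ^+ 2 + enorm w ^+ 2) / 2 <= lyap_form l y w.
Proof.
move=> l_le; have := enorm_sqrD_le (y + w) (- w); rewrite addrK enormN.
have := ler_wpM2r (sqr_ge0 (enorm y)) l_le.
by rewrite /lyap_form; lra.
Qed.

Lemma lyap_form_ge0 l y w : l <= 1/4 -> 0 <= lyap_form l y w.
Proof.
move=> l_le; apply: le_trans (lyap_form_ge y w l_le).
by rewrite divr_ge0 ?addr_ge0 ?sqr_ge0.
Qed.

Lemma sqrt_lyap_formD_le l y w h k : l <= 1/4 ->
  Num.sqrt (lyap_form l (y + h) (w + k))
    <= Num.sqrt (lyap_form l y w) + Num.sqrt (lyap_form l h k).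
Proof.
move=> l_le.
have dot_ge0 p : 0 <= lyap_dot l p p by rewrite lyap_dot_diag lyap_form_ge0.
have := sqrt_formD_le (lyap_dotDl l) (lyap_dotZl l) (lyap_dotC l) dot_ge0 (y, w) (h, k).
by rewrite !lyap_dot_diag.
Qed.

End LyapunovForm.

Section LyapunovFunction.
Variables (R : realType) (d : nat) (M m g : R) (U : 'rV[R]_d -> R) (xs : 'rV[R]_d).
Hypotheses (m_gt0 : 0 < m) (M_gt0 : 0 < M) (g_gt0 : 0 < g) (gM : 8 * M <= g ^+ 2)
  (dU : forall x, differentiable U x) (gL : grad_lipschitz M U)
  (xs_min : is_minimizer U xs).
Implicit Types x v h dv : 'rV[R]_d.

Lemma lam_ge0 : 0 <= lam m g.
Proof. by rewrite le_min !divr_ge0 ?sqr_ge0 ?ltW. Qed.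

Lemma lam_le : lam m g <= 1/4.
Proof. by rewrite ge_min lexx. Qed.

Lemma VfunE x v : Vfun U m g xs x v
  = U x - U xs + 1/4 * g ^+ 2 * lyap_form (lam m g) (x - xs) (g^-1 *: v).
Proof. by []. Qed.

Lemma enorm_scaleV v : enorm v = g * enorm (g^-1 *: v).
Proof.
by rewrite enormZ ger0_norm ?invr_ge0 ?ltW // mulrA mulfV ?gt_eqF // mul1r.
Qed.

Lemma Vfun_ge0 x v : 0 <= Vfun U m g xs x v.
Proof.
rewrite VfunE addr_ge0 ?subr_ge0 // mulr_ge0 ?lyap_form_ge0 ?lam_le //.
by rewrite mulr_ge0 ?sqr_ge0.
Qed.

Lemma Vfun_sqrt_ge x v :
  1/8 * (g * enorm (x - xs) + enorm v) <= Num.sqrt (Vfun U m g xs x v).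
Proof.
rewrite [enorm v]enorm_scaleV VfunE.
set y := x - xs; set w := g^-1 *: v.
apply: ler_sqrtr_of_sqr_le.
  by rewrite mulr_ge0 // addr_ge0 // mulr_ge0 ?enorm_ge0 // ltW.
have F_ge0 : 0 <= U x - U xs by rewrite subr_ge0.
have Q_ge := lyap_form_ge y w lam_le.
have := enorm_sqrD_le (y + w) (- w); rewrite addrK enormN => y_le.
have sum_le : (enorm y + enorm w) ^+ 2 <= 12 * lyap_form (lam m g) y w.
  have := sqr_ge0 (enorm (y + w)); have := sqr_ge0 (enorm y - enorm w).
  by rewrite sqrrB sqrrD; lra.
apply: le_trans (_ : _ <= 1/4 * g ^+ 2 * lyap_form (lam m g) y w) _; last first.
  by rewrite lerDr.
have := ler_wpM2l (sqr_ge0 g) sum_le.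
have := mulr_ge0 (sqr_ge0 g) (lyap_form_ge0 y w lam_le).
set Q := lyap_form _ _ _; set a := enorm y; set b := enorm w.
have -> : (1/8 * (g * a + g * b)) ^+ 2 = g ^+ 2 * (a + b) ^+ 2 / 64 by field.
lra.
Qed.

Lemma norm_ab_le x v :
  Num.sqrt M / 8 * norm_ab M g x v <= 1/8 * (g * enorm x + enorm v).
Proof.
rewrite /norm_ab mulrAC -(sqrtrM _ (ltW M_gt0)).
suff : Num.sqrt (M * (enorm x ^+ 2 + 2 * g^-1 * dotp x v + M^-1 * enorm v ^+ 2))
       <= g * enorm x + enorm v by lra.
apply: sqrtr_le_of_le_sqr; first by rewrite addr_ge0 ?enorm_ge0 // mulr_ge0 ?enorm_ge0 ?ltW.
have -> : M * (enorm x ^+ 2 + 2 * g^-1 * dotp x v + M^-1 * enorm v ^+ 2)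
          = M * enorm x ^+ 2 + 2 * (M / g) * dotp x v + enorm v ^+ 2.
  by field; rewrite !gt_eqF.
have Mg_ge0 : 0 <= M / g by rewrite divr_ge0 ?ltW.
have Mg_le : M / g <= g / 8.
  by rewrite ler_pdivrMr // mulrAC ler_pdivlMr // mulrC -expr2.
have nxv_ge0 := mulr_ge0 (enorm_ge0 x) (enorm_ge0 v).
have := ler_wpM2l Mg_ge0 (dotp_le_enorm x v).
have := ler_wpM2r nxv_ge0 Mg_le.
have := ler_wpM2r (sqr_ge0 (enorm x)) gM.
have := mulr_ge0 (ltW g_gt0) nxv_ge0.
have := mulr_ge0 (sqr_ge0 g) (sqr_ge0 (enorm x)).
rewrite sqrrD exprMn.
set a := enorm x; set b := enorm v; set c := dotp x v; set t := M / g.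
lra.
Qed.

Lemma norm_abN x v : norm_ab M g (- x) (- v) = norm_ab M g x v.
Proof. by rewrite /norm_ab !enormN dotpNl dotpC dotpNl opprK dotpC. Qed.

Lemma norm_ab_sqr_ge h dv :
  enorm (h + g^-1 *: dv) ^+ 2 + enorm (g^-1 *: dv) ^+ 2 <= norm_ab M g h dv ^+ 2.
Proof.
set k := g^-1 *: dv.
have dvE : dv = g *: k by rewrite /k scalerA mulfV ?gt_eqF // scale1r.
have normE : enorm h ^+ 2 + 2 * g^-1 * dotp h dv + M^-1 * enorm dv ^+ 2
             = enorm (h + k) ^+ 2 + (g ^+ 2 / M - 1) * enorm k ^+ 2.
  rewrite dvE dotpZr enormZ ger0_norm ?(ltW g_gt0) // enorm_sqrD exprMn.
  by field; rewrite !gt_eqF.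
have g2M : 2 <= g ^+ 2 / M.
  by rewrite ler_pdivlMr //; have := gM; have := M_gt0; lra.
have k_le := ler_wpM2r (sqr_ge0 (enorm k)) g2M.
have k_ge0 := sqr_ge0 (enorm k); have hk_ge0 := sqr_ge0 (enorm (h + k)).
by rewrite /norm_ab normE [X in _ <= X]sqr_sqrtr; lra.
Qed.

Lemma increment_le_norm_ab h dv :
  M * enorm h ^+ 2 + 1/4 * g ^+ 2 * lyap_form (lam m g) h (g^-1 *: dv)
    <= (8 * g * norm_ab M g h dv) ^+ 2.
Proof.
have N_ge := norm_ab_sqr_ge h dv.
set k := g^-1 *: dv in N_ge *.
have Q_le : lyap_form (lam m g) h k <= enorm (h + k) ^+ 2 + enorm k ^+ 2.
  by rewrite /lyap_form lerBlDr lerDl mulr_ge0 ?lam_ge0 ?sqr_ge0.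
have := enorm_sqrD_le (h + k) (- k); rewrite addrK enormN => h_le.
have M_le := ler_wpM2r (sqr_ge0 (enorm h)) gM.
have g2Q := ler_wpM2l (sqr_ge0 g) Q_le.
have g2h := ler_wpM2l (sqr_ge0 g) h_le.
have g2N := ler_wpM2l (sqr_ge0 g) N_ge.
have := mulr_ge0 (sqr_ge0 g) (sqr_ge0 (norm_ab M g h dv)).
rewrite !exprMn; lra.
Qed.

Lemma sqrt_Vfun_le x v x' v' :
  Num.sqrt (Vfun U m g xs x' v')
    <= Num.sqrt (Vfun U m g xs x v) + 8 * g * norm_ab M g (x' - x) (v' - v).
Proof.
have F_ge0 : 0 <= U x - U xs by rewrite subr_ge0.
have F'_le := gap_le_sqr M_gt0 dU gL xs_min x (x' - x); rewrite subrK in F'_le.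
have xE : x' - xs = (x - xs) + (x' - x) by rewrite [RHS]addrC addrA subrK.
have vE : g^-1 *: v' = g^-1 *: v + g^-1 *: (v' - v).
  by rewrite -scalerDr addrC subrK.
rewrite !VfunE xE vE.
set y := x - xs; set w := g^-1 *: v; set h := x' - x; set k := g^-1 *: (v' - v).
have Q'_le : lyap_form (lam m g) (y + h) (w + k)
    <= (Num.sqrt (lyap_form (lam m g) y w) + Num.sqrt (lyap_form (lam m g) h k)) ^+ 2.
  rewrite -[X in X <= _](sqr_sqrtr (lyap_form_ge0 _ _ lam_le)).
  rewrite ler_sqr ?nnegrE ?addr_ge0 ?sqrtr_ge0 //.
  exact: sqrt_lyap_formD_le lam_le.
have half_sqr : (g / 2) ^+ 2 = 1/4 * g ^+ 2 by field.
have sqr_half s : 0 <= s -> (g / 2 * Num.sqrt s) ^+ 2 = 1/4 * g ^+ 2 * s.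
  by move=> s_ge0; rewrite exprMn sqr_sqrtr // half_sqr.
apply: le_trans (_ : _ <= Num.sqrt ((Num.sqrt (U x - U xs) + Num.sqrt M * enorm h) ^+ 2
     + (g / 2 * Num.sqrt (lyap_form (lam m g) y w)
        + g / 2 * Num.sqrt (lyap_form (lam m g) h k)) ^+ 2)) _.
  rewrite ler_wsqrtr // lerD // -mulrDr exprMn half_sqr.
  by rewrite ler_wpM2l // mulr_ge0 ?sqr_ge0.
apply: le_trans (sqrt_sqrD_le _ _ _ _) _.
rewrite (sqr_sqrtr F_ge0) !sqr_half ?(lyap_form_ge0 _ _ lam_le) //.
rewrite lerD2l exprMn (sqr_sqrtr (ltW M_gt0)).
apply: sqrtr_le_of_le_sqr; last exact: increment_le_norm_ab.
by rewrite !mulr_ge0 ?sqrtr_ge0 // ltW.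
Qed.

End LyapunovFunction.

Unset Implicit Arguments. Set Strict Implicit.

Theorem lemma9 (R : realType) (d : nat) (M m gamma : R)
    (U : 'rV[R]_d -> R) (xs : 'rV[R]_d) :
  0 < m -> 0 < M -> Num.sqrt (8 * M) <= gamma ->
  C2 U -> grad_lipschitz M U -> strongly_convex m U -> is_minimizer U xs ->
  (forall x v : 'rV[R]_d,
     0 <= Vfun U m gamma xs x v /\
     1/8 * (gamma * enorm (x - xs) + enorm v) <= Num.sqrt (Vfun U m gamma xs x v) /\
     Num.sqrt M / 8 * norm_ab M gamma (x - xs) v
       <= 1/8 * (gamma * enorm (x - xs) + enorm v)) /\
  (forall x v x' v' : 'rV[R]_d,
     `| Num.sqrt (Vfun U m gamma xs x v) - Num.sqrt (Vfun U m gamma xs x' v') |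
       <= 8 * gamma * norm_ab M gamma (x - x') (v - v')).
Proof.
move=> m_gt0 M_gt0 g_ge [dU _] gL _ xs_min.
have M8_ge0 : 0 <= 8 * M by rewrite mulr_ge0 // ltW.
have g_gt0 : 0 < gamma by apply: lt_le_trans g_ge; rewrite sqrtr_gt0 mulr_gt0.
have gM : 8 * M <= gamma ^+ 2.
  by rewrite -(sqr_sqrtr M8_ge0) ler_sqr // nnegrE ?sqrtr_ge0 // ltW.
split=> [x v | x v x' v'].
  split; first exact: Vfun_ge0.
  by split; [exact: Vfun_sqrt_ge | exact: norm_ab_le].
have le12 := sqrt_Vfun_le m_gt0 M_gt0 g_gt0 gM dU gL xs_min x' v' x v.
have le21 := sqrt_Vfun_le m_gt0 M_gt0 g_gt0 gM dU gL xs_min x v x' v'.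
rewrite -norm_abN !opprB in le21.
rewrite ler_norml; lra.
Qed.
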